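(* Let $X,Y\in\mathbb{R}^{n\times n}$ and define $L:\mathbb{R}^{n\times n}\to\mathbb{R}^{n\times n}$ by $L(A)=XAY$. Then $L$ maps the set of minimally semipositive $n\times n$ matrices onto itself (i.e. $L(S)=S$ where $S$ is this set) if and only if either both $X$ and $Y$ are monomial, or both $-X$ and $-Y$ are monomial.
   Context: For a matrix or vector, $\geq 0$ means entrywise nonnegative and $>0$ entrywise positive. A matrix $A\in\mathbb{R}^{m\times n}$ is semipositive if there exists $x\in\mathbb{R}^n$ with $x\geq 0$ and $Ax>0$. $A$ is minimally semipositive if it is semipositive and no submatrix obtained from $A$ by deleting one or more columns is semipositive. A square matrix $A$ is monomial if $A\geq 0$ and every row and every column of $A$ contains exactly one nonzero entry. *)

(* Real numbers are modelled by an arbitrary real field R. *)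
From HB Require Import structures.
From mathcomp Require Import all_boot all_order all_algebra all_fingroup.
Set Implicit Arguments. Unset Strict Implicit. Unset Printing Implicit Defensive.
Import Order.TTheory GRing.Theory Num.Theory.
Local Open Scope ring_scope.

Definition semipositive (R : realFieldType) (m n : nat) (A : 'M[R]_(m, n)) : Prop :=
  exists x : 'cV[R]_n, (forall j, 0 <= x j 0) /\ (forall i, 0 < (A *m x) i 0).

Definition col_submx (R : realFieldType) (m n : nat) (A : 'M[R]_(m, n))
  (J : {set 'I_n}) : 'M[R]_(m, #|J|) :=
  colsub (@enum_val _ (mem J)) A.

Definition min_semipositive (R : realFieldType) (m n : nat) (A : 'M[R]_(m, n)) : Prop :=
  semipositive A /\
  forall J : {set 'I_n}, J != setT -> ~ semipositive (col_submx A J).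

Definition monomial (R : realFieldType) (n : nat) (A : 'M[R]_n) : Prop :=
  (forall i j, 0 <= A i j) /\
  (forall i, #|[set j | A i j != 0]| = 1%N) /\
  (forall j, #|[set i | A i j != 0]| = 1%N).

(* A square matrix is minimally semipositive iff it is invertible with an
   entrywise nonnegative inverse: minimality forces every nonnegative solution
   of [A x > 0] to be positive, which makes [A v >= 0] imply [v >= 0];
   conversely a vanishing coordinate of [x = A^-1 (A x)] with [A x > 0] would
   give [A^-1] a zero row.  The nonnegative matrices with nonnegative inverse
   are exactly the monomial ones, and for monomial [X], [Y] the map
   [A |-> X A Y] and its inverse [B |-> X^-1 B Y^-1] both preserve
   inverse-nonnegativity.  Conversely, if [L] maps the class onto itself,
   applying [L] and [L^-1] to the inverses of [1 + t E_jk] and letting [t]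
   grow shows that all products [(Y^-1)_aj (X^-1)_kb] and [Y_aj X_kb] are
   nonnegative.  Hence [X] and [Y] are both nonnegative or both nonpositive, and so
   are [X^-1] and [Y^-1]; [X X^-1 = 1] forces the two signs to agree. *)

From HB Require Import structures.
From mathcomp Require Import all_boot all_order all_algebra all_fingroup.
From mathcomp Require Import ring.
Import Order.TTheory GRing.Theory Num.Theory.
Local Open Scope ring_scope.
Set Implicit Arguments. Unset Strict Implicit.

Section InverseNonnegative.
Variable R : realFieldType.

Definition nonneg_mx m n (A : 'M[R]_(m, n)) : Prop := forall i j, 0 <= A i j.

Definition inverse_nonneg n (A : 'M[R]_n) : Prop :=
  A \in unitmx /\ nonneg_mx (invmx A).

Lemma invmx_eq n (A B : 'M[R]_n) : A *m B = 1%:M -> invmx A = B.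
Proof.
by move=> AB1; have [uA _] := mulmx1_unit AB1; rewrite -[B](mulKmx uA) AB1 mulmx1.
Qed.

Lemma invmx_mul n (A B : 'M[R]_n) : A \in unitmx -> B \in unitmx ->
  invmx (A *m B) = invmx B *m invmx A.
Proof.
by move=> uA uB; apply: invmx_eq; rewrite mulmxA mulmxK // mulmxV.
Qed.

Lemma nonneg_mulmx m n p (A : 'M[R]_(m, n)) (B : 'M[R]_(n, p)) :
  nonneg_mx A -> nonneg_mx B -> nonneg_mx (A *m B).
Proof. by move=> A_ge0 B_ge0 i j; rewrite mxE sumr_ge0 // => k _; rewrite mulr_ge0. Qed.

Lemma inverse_nonneg_mul n (A B : 'M[R]_n) :
  inverse_nonneg A -> inverse_nonneg B -> inverse_nonneg (A *m B).
Proof.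
case=> uA A_ge0 [uB B_ge0]; split; first by rewrite unitmx_mul uA.
by rewrite invmx_mul //; apply: nonneg_mulmx.
Qed.

Lemma inverse_nonneg_invmx n (A : 'M[R]_n) :
  A \in unitmx -> nonneg_mx A -> inverse_nonneg (invmx A).
Proof. by move=> uA A_ge0; rewrite /inverse_nonneg unitmx_inv invmxK. Qed.

End InverseNonnegative.

Section MinSemipositive.
Variable R : realFieldType.

Lemma col_submxE m n (A : 'M[R]_(m, n)) (J : {set 'I_n}) :
  col_submx A J = A *m colsub (@enum_val _ (mem J)) 1%:M.
Proof. by rewrite mulmx_colsub mulmx1. Qed.

Lemma semipositive_col_submx_support m n (A : 'M[R]_(m, n)) (w : 'cV[R]_n) :
  (forall j, 0 <= w j 0) -> (forall i, 0 < (A *m w) i 0) ->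
  semipositive (col_submx A [set j | w j 0 != 0]).
Proof.
move=> w_ge0 Aw_gt0; exists (\col_k w (enum_val k) 0); split=> [k|i].
  by rewrite mxE.
suff -> : (col_submx A [set j | w j 0 != 0] *m \col_k w (enum_val k) 0) i 0
          = (A *m w) i 0 by [].
rewrite !mxE (eq_bigr (fun k => A i (enum_val k) * w (enum_val k) 0)) => [|k _];
  last by rewrite !mxE.
rewrite -(big_enum_val (fun j => A i j * w j 0)) /= big_mkcond /=.
by apply: eq_bigr => j _; rewrite inE; case: eqP => // ->; rewrite mulr0.
Qed.

Lemma semipositive_col_submx_ext m n (A : 'M[R]_(m, n)) (J : {set 'I_n}) :
  semipositive (col_submx A J) ->
  exists x : 'cV[R]_n, [/\ forall j, 0 <= x j 0, forall j, j \notin J -> x j 0 = 0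
                         & forall i, 0 < (A *m x) i 0].
Proof.
case=> y [y_ge0 Ay_gt0]; exists (colsub (@enum_val _ (mem J)) 1%:M *m y); split.
- by move=> j; rewrite mxE sumr_ge0 // => k _; rewrite !mxE mulr_ge0 ?ler0n.
- move=> j jNJ; rewrite mxE big1 // => k _; rewrite !mxE.
  by case: eqP => [jk|]; [move: jNJ; rewrite jk enum_valP | rewrite mul0r].
- by move=> i; rewrite mulmxA -col_submxE.
Qed.

Lemma min_semipositive_solution_gt0 n (A : 'M[R]_n) : min_semipositive A ->
  forall w : 'cV[R]_n, (forall j, 0 <= w j 0) -> (forall i, 0 < (A *m w) i 0) ->
  forall j, 0 < w j 0.
Proof.
case=> _ Amin w w_ge0 Aw_gt0 j; rewrite lt_def w_ge0 andbT; apply/eqP => wj0.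
apply: Amin (semipositive_col_submx_support w_ge0 Aw_gt0).
by apply/eqP => /setP /(_ j); rewrite !inE wj0 eqxx.
Qed.

(* The witness is pushed along [v] until its first coordinate vanishes; it
   stays a positive solution of [A w > 0], against [min_semipositive_solution_gt0]. *)
Lemma min_semipositive_monotone n (A : 'M[R]_n) : min_semipositive A ->
  forall v : 'cV[R]_n, (forall i, 0 <= (A *m v) i 0) -> forall j, 0 <= v j 0.
Proof.
move=> Amin v Av_ge0 j1; rewrite leNgt; apply/negP => vj1_lt0.
have [[x [x_ge0 Ax_gt0]] _] := Amin.
have x_gt0 := min_semipositive_solution_gt0 Amin x_ge0 Ax_gt0.
pose ratio j := x j 0 / - v j 0.
have [j0 vj0_lt0 ratio_min] := @arg_minP _ _ _ j1 (fun j => v j 0 < 0) ratio vj1_lt0.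
pose t := ratio j0; pose w := x + t *: v.
have t_gt0 : 0 < t by rewrite divr_gt0 ?oppr_gt0.
have w_ge0 j : 0 <= w j 0.
  rewrite !mxE; have [vj_lt0 | vj_ge0] := ltP (v j 0) 0.
    have := ratio_min j vj_lt0; rewrite ler_pdivlMr ?oppr_gt0 //.
    by rewrite mulrN -subr_ge0 opprK addrC.
  by rewrite addr_ge0 // mulr_ge0 // ltW.
have Aw_gt0 i : 0 < (A *m w) i 0.
  by rewrite mulmxDr -scalemxAr mxE [in X in _ + X]mxE ltr_wpDr // mulr_ge0 // ltW.
have := min_semipositive_solution_gt0 Amin w_ge0 Aw_gt0 j0.
by rewrite !mxE /t /ratio invrN mulrN mulNr -mulrA mulVf ?mulr1 ?subrr ?ltxx // ltr0_neq0.
Qed.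

Lemma unitmx_of_mulmx_eq0 n (A : 'M[R]_n) :
  (forall z : 'cV[R]_n, A *m z = 0 -> z = 0) -> A \in unitmx.
Proof.
move=> A_inj; rewrite -unitmx_tr -row_free_unit -kermx_eq0.
apply/eqP/row_matrixP => i; rewrite row0; apply: trmx_inj; rewrite trmx0.
by apply: A_inj; rewrite -{1}[A]trmxK -trmx_mul -row_mul mulmx_ker row0 trmx0.
Qed.

Lemma min_semipositive_unitmx n (A : 'M[R]_n) : min_semipositive A -> A \in unitmx.
Proof.
move=> Amin; apply: unitmx_of_mulmx_eq0 => z Az0; apply/matrixP => j k.
rewrite (ord1 k) mxE; apply/eqP; rewrite eq_le; apply/andP; split.
  have := min_semipositive_monotone Amin (v := - z) _ j.
  by rewrite mxE oppr_ge0; apply=> i; rewrite mulmxN Az0 oppr0 mxE.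
by apply: (min_semipositive_monotone Amin) => i; rewrite Az0 mxE.
Qed.

Lemma min_semipositive_inverse_nonneg n (A : 'M[R]_n) :
  min_semipositive A -> inverse_nonneg A.
Proof.
move=> Amin; have uA := min_semipositive_unitmx Amin; split=> // i k.
have := min_semipositive_monotone Amin (v := col k (invmx A)) _ i.
rewrite mxE; apply=> j.
by rewrite colE mulmxA mulmxV // mul1mx mxE ler0n.
Qed.

Lemma inverse_nonneg_min_semipositive n (A : 'M[R]_n) :
  inverse_nonneg A -> min_semipositive A.
Proof.
case=> uA B_ge0; split.
  exists (invmx A *m const_mx 1); split=> [j|i].
    by rewrite mxE sumr_ge0 // => k _; rewrite mxE mulr_ge0.
  by rewrite mulKVmx // mxE ltr01.
move=> J JNT /semipositive_col_submx_ext [x [x_ge0 x_offJ Ax_gt0]].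
have /subsetPn [j _ jNJ] : ~~ ([set: 'I_n] \subset J) by rewrite subTset.
have B_row_j0 k : invmx A j k = 0.
  have : invmx A j k * (A *m x) k 0 = 0.
    apply: (@psumr_eq0P _ _ predT (fun l => invmx A j l * (A *m x) l 0)) => // [l _|].
      by rewrite mulr_ge0 // ltW.
    by have := x_offJ j jNJ; rewrite -{1}(mulKmx uA x) mxE.
  by move/eqP; rewrite mulf_eq0 (gt_eqF (Ax_gt0 k)) orbF => /eqP.
have := congr1 (fun M : 'M[R]_n => M j j) (mulVmx uA).
rewrite !mxE eqxx big1 => [/esym/eqP|k _]; first by rewrite oner_eq0.
by rewrite B_row_j0 mul0r.
Qed.

Lemma min_semipositiveE n (A : 'M[R]_n) : min_semipositive A <-> inverse_nonneg A.
Proof.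
split; [exact: min_semipositive_inverse_nonneg | exact: inverse_nonneg_min_semipositive].
Qed.
End MinSemipositive.

Section Monomial.
Variable R : realFieldType.

(* If [M i l != 0], the vanishing of [(M N) i k] for [k != i] kills row [l] of
   [N] off column [i]; so [(N M) l] is a multiple of row [i] of [M], and
   [N M = 1] leaves room for only one such [l]. *)
Lemma nonneg_inverse_row_card1 n (M N : 'M[R]_n) :
  nonneg_mx M -> nonneg_mx N -> M *m N = 1%:M -> N *m M = 1%:M ->
  forall i, #|[set j | M i j != 0]| = 1%N.
Proof.
move=> M_ge0 N_ge0 MN1 NM1 i.
have [j0 Mij0 | M_row0] := pickP (fun j => M i j != 0); last first.
  have := congr1 (fun C : 'M[R]_n => C i i) MN1; rewrite !mxE eqxx big1 => [/esym/eqP|l _].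
    by rewrite oner_eq0.
  by have /negbFE/eqP -> := M_row0 l; rewrite mul0r.
have N_off l k : M i l != 0 -> k != i -> N l k = 0.
  move=> Mil ki; have MNik : \sum_l' M i l' * N l' k = 0.
    by have := congr1 (fun C : 'M[R]_n => C i k) MN1; rewrite !mxE eq_sym (negbTE ki).
  have /eqP := @psumr_eq0P _ _ predT (fun l' => M i l' * N l' k)
    (fun l' _ => mulr_ge0 (M_ge0 i l') (N_ge0 l' k)) MNik l isT.
  by rewrite mulf_eq0 (negbTE Mil) => /eqP.
have NM_row l j : M i l != 0 -> (N *m M) l j = N l i * M i j.
  move=> Mil; rewrite mxE (bigD1 i) //= big1 ?addr0 // => k ki.
  by rewrite N_off ?mul0r.
apply: (@eq_card1 _ j0) => j; rewrite !inE.
have [-> | jj0] := eqVneq j j0; first by rewrite Mij0.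
apply/negbTE; apply: contraNN (oner_neq0 R) => Mij.
have := NM_row j0 j Mij0; rewrite NM1 mxE eq_sym (negbTE jj0) => /esym/eqP.
rewrite mulf_eq0 (negbTE Mij) orbF => /eqP Nj0i.
by have := NM_row j0 j0 Mij0; rewrite NM1 mxE eqxx Nj0i mul0r => /eqP.
Qed.

Lemma monomial_of_nonneg_inverse n (M N : 'M[R]_n) :
  nonneg_mx M -> nonneg_mx N -> M *m N = 1%:M -> monomial M.
Proof.
move=> M_ge0 N_ge0 MN1; have NM1 := mulmx1C MN1.
split=> //; split; first exact: nonneg_inverse_row_card1 MN1 NM1.
move=> j; have <- : #|[set i | M^T j i != 0]| = 1%N.
  apply: (@nonneg_inverse_row_card1 _ _ N^T) => [a b|a b||]; rewrite ?mxE //.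
    by rewrite -trmx_mul NM1 trmx1.
  by rewrite -trmx_mul MN1 trmx1.
by apply: eq_card => i; rewrite !inE mxE.
Qed.

Lemma monomial_inverse_nonneg n (M : 'M[R]_n) : monomial M -> inverse_nonneg M.
Proof.
case=> M_ge0 [row1 col1].
have supp1 (p : pred 'I_n) : #|[set x | p x]| = 1%N -> exists s, forall x, p x = (x == s).
  by move=> /eqP /cards1P [s Sp]; exists s => x; rewrite -in_set1 -Sp inE.
pose Z := \matrix_(j, k) (if M k j != 0 then (M k j)^-1 else 0).
have MZ1 : M *m Z = 1%:M.
  apply/matrixP => i k; rewrite !mxE.
  have [j0 row_i] := supp1 _ (row1 i); have [i0 col_j0] := supp1 _ (col1 j0).
  have Mij0 : M i j0 != 0 by rewrite row_i.
  rewrite (bigD1 j0) //= big1 ?addr0 => [|j jj0]; last first.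
    by move: (row_i j); rewrite (negbTE jj0) => /negbFE/eqP ->; rewrite mul0r.
  rewrite mxE col_j0; have [-> | ki0] := eqVneq k i0.
    by move: Mij0; rewrite col_j0 => /eqP ->; rewrite eqxx divff // col_j0.
  rewrite mulr0; move: Mij0; rewrite col_j0 => /eqP ->.
  by rewrite eq_sym (negbTE ki0).
split; first by have [] := mulmx1_unit MZ1.
rewrite (invmx_eq MZ1) => j k; rewrite mxE.
by case: ifP => // _; rewrite invr_ge0.
Qed.
End Monomial.

Section LinearPreservers.
Variable R : realFieldType.

Definition preserves_min_semipositive n (X Y : 'M[R]_n) : Prop :=
  (forall A : 'M[R]_n, min_semipositive A -> min_semipositive (X *m A *m Y)) /\
  (forall B : 'M[R]_n, min_semipositive B ->
     exists A : 'M[R]_n, min_semipositive A /\ B = X *m A *m Y).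

Lemma preserves_min_semipositiveN n (X Y : 'M[R]_n) :
  preserves_min_semipositive X Y -> preserves_min_semipositive (- X) (- Y).
Proof.
have XAY A : - X *m A *m - Y = X *m A *m Y by rewrite mulmxN !mulNmx opprK.
case=> XY_maps XY_onto; split=> [A /XY_maps | B /XY_onto [A [Amin ->]]].
  by rewrite XAY.
by exists A; rewrite XAY.
Qed.

Lemma monomial_preserves_min_semipositive n (X Y : 'M[R]_n) :
  monomial X -> monomial Y -> preserves_min_semipositive X Y.
Proof.
move=> mX mY; have [X_inv Y_inv] := (monomial_inverse_nonneg mX, monomial_inverse_nonneg mY).
have iX := inverse_nonneg_invmx X_inv.1 mX.1; have iY := inverse_nonneg_invmx Y_inv.1 mY.1.
split=> [A /min_semipositiveE Ainv | B /min_semipositiveE Binv].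
  by apply/min_semipositiveE; do 2?apply: inverse_nonneg_mul.
exists (invmx X *m B *m invmx Y); split.
  by apply/min_semipositiveE; do 2?apply: inverse_nonneg_mul.
by rewrite !mulmxA mulmxV ?X_inv.1 // mul1mx mulmxKV ?Y_inv.1.
Qed.

Lemma affine_ge0_slope (c d : R) : (forall t, 0 <= t -> 0 <= c + t * d) -> 0 <= d.
Proof.
move=> affine_ge0; rewrite leNgt; apply/negP => d_lt0.
have t_ge0 : 0 <= (`|c| + 1) / - d by rewrite divr_ge0 ?addr_ge0 // oppr_ge0 ltW.
have := affine_ge0 _ t_ge0.
rewrite -mulrA mulrC invrN mulNr mulVf ?lt_eqF // mulN1r opprD addrA subr_ge0.
by apply/negP; rewrite -ltNge (le_lt_trans _ ltr01) // subr_le0 ler_norm.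
Qed.

Lemma unitmx_add_delta n (j k : 'I_n) (t : R) :
  0 <= t -> 1%:M + t *: delta_mx j k \in unitmx.
Proof.
move=> t_ge0; pose s := (k == j)%:R : R.
have st_neq0 : 1 + t * s != 0 by rewrite gt_eqF // ltr_wpDr // mulr_ge0 ?ler0n.
suff /mulmx1_unit[] : (1%:M - (t / (1 + t * s)) *: delta_mx j k)
                        *m (1%:M + t *: delta_mx j k) = 1%:M by [].
rewrite mulmxDr mulmx1 mulmxBl mul1mx -scalemxAl -scalemxAr mul_delta_mx_cond.
rewrite -scaler_nat scalerA -/s; apply/matrixP => a b; rewrite !mxE.
by field.
Qed.

Lemma mulmx_delta_mxE n (P Q : 'M[R]_n) j k a b :
  (P *m delta_mx j k *m Q) a b = P a j * Q k b.
Proof.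
rewrite -mulmxA mxE (bigD1 j) //= big1 ?addr0 => [|l lj]; last first.
  by rewrite mxE big1 ?mulr0 // => m _; rewrite mxE (negbTE lj) mul0r.
rewrite mxE (bigD1 k) //= big1 ?addr0 => [|m mk]; last by rewrite mxE (negbTE mk) andbF mul0r.
by rewrite mxE !eqxx mul1r.
Qed.

Lemma entry_products_ge0 n (P Q : 'M[R]_n) :
  (forall M, M \in unitmx -> nonneg_mx M -> nonneg_mx (P *m M *m Q)) ->
  forall a j k b, 0 <= P a j * Q k b.
Proof.
move=> PQ_ge0 a j k b; rewrite -mulmx_delta_mxE.
apply: (@affine_ge0_slope ((P *m Q) a b)) => t t_ge0.
have M_ge0 : nonneg_mx (1%:M + t *: delta_mx j k).
  by move=> c d; rewrite !mxE addr_ge0 ?mulr_ge0 ?ler0n.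
have := PQ_ge0 _ (unitmx_add_delta j k t_ge0) M_ge0 a b.
by rewrite mulmxDr mulmx1 mulmxDl -scalemxAr -scalemxAl mxE [in X in _ + X]mxE.
Qed.

Lemma nonneg_or_nonpos_of_products m n p q (P : 'M[R]_(m, n)) (Q : 'M[R]_(p, q)) :
  P != 0 -> Q != 0 -> (forall a j k b, 0 <= P a j * Q k b) ->
  (nonneg_mx P /\ nonneg_mx Q) \/ (nonneg_mx (- P) /\ nonneg_mx (- Q)).
Proof.
have entry_neq0 m' n' (M : 'M[R]_(m', n')) : M != 0 -> exists i j, M i j != 0.
  move=> M_neq0; have [[i j] Mij | M0] := pickP (fun ij => M ij.1 ij.2 != 0).
    by exists i, j.
  move: M_neq0; suff -> : M = 0 by rewrite eqxx.
  by apply/matrixP => i j; rewrite mxE; apply/eqP/negbFE/(M0 (i, j)).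
move=> /entry_neq0 [a [j Paj]] /entry_neq0 [k [b Qkb]] PQ_ge0.
have [Paj_lt0 | Paj_gt0 | Paj0] := ltgtP (P a j) 0; last by rewrite Paj0 eqxx in Paj.
  have Q_le0 c d : Q c d <= 0 by rewrite -(nmulr_rge0 _ Paj_lt0) PQ_ge0.
  have Qkb_lt0 : Q k b < 0 by rewrite lt_def eq_sym Qkb Q_le0.
  by right; split=> c d; rewrite mxE oppr_ge0 // -(nmulr_lge0 _ Qkb_lt0) PQ_ge0.
have Q_ge0 c d : 0 <= Q c d by rewrite -(pmulr_rge0 _ Paj_gt0) PQ_ge0.
have Qkb_gt0 : 0 < Q k b by rewrite lt_def Qkb Q_ge0.
by left; split=> // c d; rewrite -(pmulr_lge0 _ Qkb_gt0) PQ_ge0.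
Qed.

Lemma unitmx_neq0 n (A : 'M[R]_n.+1) : A \in unitmx -> A != 0.
Proof. by apply: contraTneq => ->; rewrite unitmxE det0 unitr0. Qed.

Lemma nonneg_nonpos_mulmx_neq1 n (M N : 'M[R]_n.+1) :
  nonneg_mx M -> nonneg_mx (- N) -> M *m N != 1%:M.
Proof.
move=> M_ge0 N_le0; apply/eqP => /(congr1 (fun C : 'M[R]_n.+1 => C ord0 ord0)).
rewrite !mxE eqxx /= => MN00.
have : \sum_l M ord0 l * N l ord0 <= 0.
  rewrite -oppr_ge0 -sumrN sumr_ge0 // => l _.
  by rewrite -mulrN mulr_ge0 //; have := N_le0 l ord0; rewrite mxE.
by rewrite MN00 ler10.
Qed.

Lemma preserves_min_semipositive_monomial n (X Y : 'M[R]_n.+1) :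
  preserves_min_semipositive X Y ->
  (monomial X /\ monomial Y) \/ (monomial (- X) /\ monomial (- Y)).
Proof.
case=> XY_maps XY_onto.
have invmx_min_semipositive (M : 'M[R]_n.+1) : M \in unitmx -> nonneg_mx M ->
    min_semipositive (invmx M).
  by move=> uM M_ge0; apply/min_semipositiveE; apply: inverse_nonneg_invmx.
have [uX uY] : X \in unitmx /\ Y \in unitmx.
  have one_ge0 : nonneg_mx (1%:M : 'M[R]_n.+1) by move=> i j; rewrite mxE ler0n.
  have /XY_maps/min_semipositiveE[] := invmx_min_semipositive _ (unitmx1 _ _) one_ge0.
  by rewrite invmx1 mulmx1 unitmx_mul => /andP.
have invYX_ge0 : forall a j k b, 0 <= invmx Y a j * invmx X k b.
  apply: entry_products_ge0 => M uM M_ge0.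
  have /XY_maps/min_semipositiveE[_] := invmx_min_semipositive _ uM M_ge0.
  by rewrite !invmx_mul ?unitmx_mul ?unitmx_inv ?uM ?uX // invmxK mulmxA.
have YX_ge0 : forall a j k b, 0 <= Y a j * X k b.
  apply: entry_products_ge0 => M uM M_ge0.
  have [A [/min_semipositiveE[_ A_ge0] eM]] := XY_onto _ (invmx_min_semipositive _ uM M_ge0).
  have A_eq : A = invmx X *m invmx M *m invmx Y.
    by rewrite eM !mulmxA mulVmx // mul1mx mulmxK.
  suff <- : invmx A = Y *m M *m X by [].
  by apply: invmx_eq; rewrite A_eq !mulmxA !mulmxKV // mulVmx.
have [uiX uiY] : invmx X \in unitmx /\ invmx Y \in unitmx by rewrite !unitmx_inv.
have [[iY_ge0 iX_ge0] | [iY_le0 iX_le0]] :=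
  nonneg_or_nonpos_of_products (unitmx_neq0 uiY) (unitmx_neq0 uiX) invYX_ge0;
have [[Y_ge0 X_ge0] | [Y_le0 X_le0]] :=
  nonneg_or_nonpos_of_products (unitmx_neq0 uY) (unitmx_neq0 uX) YX_ge0.
- by left; split; apply: monomial_of_nonneg_inverse (mulmxV _).
- by have /eqP := nonneg_nonpos_mulmx_neq1 iX_ge0 X_le0; rewrite mulVmx.
- by have /eqP := nonneg_nonpos_mulmx_neq1 X_ge0 iX_le0; rewrite mulmxV.
- have opp_inv (M : 'M[R]_n.+1) : M \in unitmx -> - M *m - invmx M = 1%:M.
    by move=> uM; rewrite mulNmx mulmxN opprK mulmxV.
  by right; split; apply: monomial_of_nonneg_inverse (opp_inv _ _).
Qed.
End LinearPreservers.

Theorem mainTheorem7 (R : realFieldType) (n : nat) (X Y : 'M[R]_n) :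
  ((forall A : 'M[R]_n, min_semipositive A -> min_semipositive (X *m A *m Y)) /\
   (forall B : 'M[R]_n, min_semipositive B ->
      exists A : 'M[R]_n, min_semipositive A /\ B = X *m A *m Y))
  <->
  ((monomial X /\ monomial Y) \/ (monomial (- X) /\ monomial (- Y))).
Proof.
rewrite -/(preserves_min_semipositive X Y); split.
  case: n X Y => [|n] X Y; last exact: preserves_min_semipositive_monomial.
  by left; split; (split; [case | split; case]).
case=> [[mX mY] | [mX mY]]; first exact: monomial_preserves_min_semipositive.
rewrite -[X]opprK -[Y]opprK; apply: preserves_min_semipositiveN.
exact: monomial_preserves_min_semipositive.
Qed.
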